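(* An affine system $(X,\kappa,A)$ is sober if and only if there exist a set $I$ and an embedding $(f,\varphi):(X,\kappa,A)\to\mathsf{S}^I$ in $\mathbf{Sys}(L)$ which is sober, i.e. such that for every $p\in Pt_L(A)$ and every $y\in|L|^I$ with $p\circ\varphi=\ell_{\mathsf{S}^I}(y)$ there exists $x\in X$ with $\ell(x)=p$ and $f(x)=y$.
   Context: Fix a variety $\mathbf{A}$ of algebras (a full subcategory of the category of $\Omega$-algebras and homomorphisms closed under products, subalgebras and homomorphic images), which has all set-indexed coproducts $(A_i\xrightarrow{\mu_i}\coprod_iA_i)_i$ and a free algebra $S$ over a singleton $\{*\}$ with universal map $\eta:\{*\}\to|S|$; for an algebra $A$ and $a\in A$ let $\overline{a}^A:S\to A$ be the unique homomorphism with $\eta( * )\mapsto a$. Fix an $\mathbf{A}$-algebra $L$; $L^X$ is the power algebra. An affine system is $(X,\kappa,A)$ with $X$ a set, $A$ an algebra, $\kappa:A\to L^X$ a homomorphism; a morphism $(f,\varphi):(X_1,\kappa_1,A_1)\to(X_2,\kappa_2,A_2)$ is a map $f:X_1\to X_2$ with a homomorphism $\varphi:A_2\to A_1$ such that $\kappa_1(\varphi(a))(x)=\kappa_2(a)(f(x))$ for all $a\in A_2,x\in X_1$; composition $(g,\psi)\circ(f,\varphi)=(g\circ f,\varphi\circ\psi)$; this is $\mathbf{Sys}(L)$. A morphism $(f,\varphi):(X_1,\kappa_1,A_1)\to(X_2,\kappa_2,A_2)$ is initial if for every system $(Y,\sigma,B)$ and pair of a map $g:Y\to X_1$ and homomorphism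 $\psi:A_1\to B$ such that $(f\circ g,\psi\circ\varphi)$ is a morphism, $(g,\psi)$ is a morphism; an embedding is an initial morphism with $f$ injective and $\varphi$ an epimorphism in $\mathbf{A}$. For an algebra $A$, $Pt_L(A)$ is the set of homomorphisms $A\to L$. For a system $(X,\kappa,A)$, $\ell:X\to Pt_L(A)$ is $\ell(x)(a)=\kappa(a)(x)$; the system is sober if $\ell$ is bijective. The Sierpinski affine system is $\mathsf{S}=(|L|,\kappa_S,S)$ with $\kappa_S:S\to L^{|L|}$ the unique homomorphism with $\kappa_S(s)(a)=\overline{a}^L(s)$ (equivalently $\kappa_S(\eta( * ))=\mathrm{id}_L$). The power $\mathsf{S}^I$ is the product $(|L|^I,\theta,\coprod_IS)$ with $\theta(\mu_i(s))(x)=\kappa_S(s)(x_i)$, and $\ell_{\mathsf{S}^I}$ is its map $|L|^I\to Pt_L(\coprod_IS)$. *)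

From Stdlib Require Import FunctionalExtensionality.
Unset Implicit Arguments.
Unset Strict Implicit.

Record signature := Signature { op_sym : Type; arity : op_sym -> Type }.
Arguments arity {s} o.

Section UA.
Variable Sg : signature.

Record algebra := Algebra {
  carrier :> Type;
  ops : forall o : op_sym Sg, (arity o -> carrier) -> carrier }.
Arguments ops a o args.

Definition is_hom {A B : algebra} (f : A -> B) : Prop :=
  forall (o : op_sym Sg) (args : arity o -> A),
    f (ops A o args) = ops B o (fun k => f (args k)).

Definition prod_alg {J : Type} (F : J -> algebra) : algebra :=
  @Algebra (forall j, F j) (fun o args j => ops (F j) o (fun k => args k j)).

Definition power_alg (L : algebra) (X : Type) : algebra := prod_alg (fun _ : X => L).

Definition op_closed {A : algebra} (P : A -> Prop) : Prop :=
  forall o (args : arity o -> A), (forall k, P (args k)) -> P (ops A o args).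

Definition sub_alg {A : algebra} {P : A -> Prop} (HP : op_closed P) : algebra :=
  @Algebra {x : A | P x}
    (fun o args => exist _ (ops A o (fun k => proj1_sig (args k)))
                     (HP o _ (fun k => proj2_sig (args k)))).

Record variety (V : algebra -> Prop) : Prop := {
  var_prod : forall (J : Type) (F : J -> algebra), (forall j, V (F j)) -> V (prod_alg F);
  var_sub : forall (A : algebra) (P : A -> Prop) (HP : op_closed P), V A -> V (sub_alg HP);
  var_img : forall (A B : algebra) (f : A -> B), is_hom f ->
              (forall b, exists a, f a = b) -> V A -> V B }.

Record coproduct (V : algebra -> Prop) (I : Type) (F : I -> algebra) := {
  cp_alg : algebra;
  cp_in : V cp_alg;
  cp_inj : forall i, F i -> cp_alg;
  cp_inj_hom : forall i, is_hom (cp_inj i);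
  cp_pair : forall B : algebra, V B -> (forall i, F i -> B) -> cp_alg -> B;
  cp_pair_hom : forall (B : algebra) (HB : V B) (g : forall i, F i -> B),
      (forall i, is_hom (g i)) -> is_hom (cp_pair B HB g);
  cp_pair_inj : forall (B : algebra) (HB : V B) (g : forall i, F i -> B),
      (forall i, is_hom (g i)) -> forall i s, cp_pair B HB g (cp_inj i s) = g i s;
  cp_pair_uniq : forall (B : algebra) (HB : V B) (g : forall i, F i -> B),
      (forall i, is_hom (g i)) -> forall h : cp_alg -> B, is_hom h ->
      (forall i s, h (cp_inj i s) = g i s) -> forall c, h c = cp_pair B HB g c }.
Arguments cp_alg {V I F} _.
Arguments cp_in {V I F} _.
Arguments cp_inj {V I F} _ i.
Arguments cp_pair {V I F} _ B HB g.
Arguments cp_pair_hom {V I F} _ B HB g.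

(* a chosen free V-algebra over a singleton {*}, with eta( * ) = fr_eta *)
Record free1 (V : algebra -> Prop) := {
  fr_alg : algebra;
  fr_in : V fr_alg;
  fr_eta : fr_alg;
  fr_ext : forall B : algebra, V B -> B -> fr_alg -> B;
  fr_ext_hom : forall (B : algebra) (HB : V B) (b : B), is_hom (fr_ext B HB b);
  fr_ext_eta : forall (B : algebra) (HB : V B) (b : B), fr_ext B HB b fr_eta = b;
  fr_ext_uniq : forall (B : algebra) (HB : V B) (b : B) (h : fr_alg -> B),
      is_hom h -> h fr_eta = b -> forall s, h s = fr_ext B HB b s }.
Arguments fr_alg {V} _.
Arguments fr_in {V} _.
Arguments fr_eta {V} _.
Arguments fr_ext {V} _ B HB b.
Arguments fr_ext_hom {V} _ B HB b.

Section Systems.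
Variable V : algebra -> Prop.
Variable L : algebra.

Record system := System {
  sys_pts : Type;
  sys_alg : algebra;
  sys_alg_in : V sys_alg;
  sys_kappa : sys_alg -> power_alg L sys_pts;
  sys_kappa_hom : is_hom sys_kappa }.

Definition is_morphism (s1 s2 : system) (f : sys_pts s1 -> sys_pts s2)
    (phi : sys_alg s2 -> sys_alg s1) : Prop :=
  is_hom phi /\
  forall (a : sys_alg s2) (x : sys_pts s1), sys_kappa s1 (phi a) x = sys_kappa s2 a (f x).

Definition is_initial (s1 s2 : system) (f : sys_pts s1 -> sys_pts s2)
    (phi : sys_alg s2 -> sys_alg s1) : Prop :=
  forall (t : system) (g : sys_pts t -> sys_pts s1) (psi : sys_alg s1 -> sys_alg t),
    is_hom psi ->
    is_morphism t s2 (fun y => f (g y)) (fun a => psi (phi a)) ->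
    is_morphism t s1 g psi.

Definition is_epi {A B : algebra} (phi : A -> B) : Prop :=
  forall (C : algebra), V C -> forall h1 h2 : B -> C, is_hom h1 -> is_hom h2 ->
    (forall a, h1 (phi a) = h2 (phi a)) -> forall b, h1 b = h2 b.

Definition is_embedding (s1 s2 : system) (f : sys_pts s1 -> sys_pts s2)
    (phi : sys_alg s2 -> sys_alg s1) : Prop :=
  is_morphism s1 s2 f phi /\ is_initial s1 s2 f phi /\
  (forall x x', f x = f x' -> x = x') /\ is_epi phi.

Definition is_point {A : algebra} (p : A -> L) : Prop := is_hom p.

Definition ell {s : system} (x : sys_pts s) : sys_alg s -> L :=
  fun a => sys_kappa s a x.

Definition sober (s : system) : Prop :=
  (forall x x' : sys_pts s, (forall a, ell x a = ell x' a) -> x = x') /\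
  (forall p : sys_alg s -> L, is_point p -> exists x, forall a, ell x a = p a).

End Systems.

Section Sierpinski.
Variable V : algebra -> Prop.
Variable L : algebra.
Hypothesis HL : V L.
Variable FS : free1 V.

Definition kappa_S (s : fr_alg FS) : power_alg L L := fun a => fr_ext FS L HL a s.

Lemma kappa_S_hom : is_hom kappa_S.
Proof.
  intros o args. unfold kappa_S, power_alg, prod_alg; simpl. apply functional_extensionality; intro a.
  simpl. apply (fr_ext_hom FS L HL a).
Qed.

Definition sierpinski : system V L :=
  @System V L L (fr_alg FS) (fr_in FS) kappa_S kappa_S_hom.

Variable cop : forall I : Type, coproduct V I (fun _ : I => fr_alg FS).

(* theta : coprod_I S -> L^(|L|^I), theta(mu_i(s))(x) = kappa_S(s)(x_i);
   componentwise, theta(c)(x) = [ s |-> kappa_S(s)(x_i) ]_i (c) *)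
Definition theta (I : Type) (c : cp_alg (cop I)) : power_alg L (I -> L) :=
  fun x => cp_pair (cop I) L HL (fun i s => kappa_S s (x i)) c.

Lemma theta_hom (I : Type) : is_hom (@theta I).
Proof.
  intros o args. unfold theta, power_alg, prod_alg; simpl. apply functional_extensionality; intro x.
  simpl. apply (cp_pair_hom (cop I) L HL).
  intros i o' args'. unfold kappa_S. apply (fr_ext_hom FS L HL).
Qed.

Definition sierpinski_pow (I : Type) : system V L :=
  @System V L (I -> L) (cp_alg (cop I)) (cp_in (cop I)) (@theta I) (@theta_hom I).

End Sierpinski.
End UA.

Arguments algebra : clear implicits.
Arguments variety {Sg} V.
Arguments free1 {Sg} V.
Arguments fr_alg {Sg V} _.
Arguments coproduct {Sg} V I F.
Arguments cp_alg {Sg V I F} _.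
Arguments system {Sg} V L.
Arguments sys_pts {Sg V L} _.
Arguments sys_alg {Sg V L} _.
Arguments sys_kappa {Sg V L} _ _.
Arguments sober {Sg V L} s.
Arguments is_embedding {Sg V L} s1 s2 f phi.
Arguments is_point {Sg L A} p.
Arguments ell {Sg V L s} x a.
Arguments sierpinski_pow {Sg V L} HL FS cop I.
Arguments sierpinski {Sg V L} HL FS.

(* The coproduct of I copies of the free algebra S is free on the generators
   mu_i(eta( * )), and theta(c)(y) is the point of it sending the i-th
   generator to y_i; hence a morphism (f, phi) into S^I is nothing but a
   homomorphism phi with f(x)_i = ell(x)(phi(mu_i(eta( * )))).
   For a sober system one takes I = |A|, f = ell and phi the homomorphism
   sending the a-th generator to a: phi is onto, hence epi, and makes (f, phi)
   initial, while bijectivity of ell gives injectivity of f and the sobriety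
   of the embedding.  Conversely, these coordinates of f show that f injective
   forces ell injective, and a point p of A is realised by applying the
   sobriety of the embedding to y_i := p(phi(mu_i(eta( * ))). *)

From Stdlib Require Import FunctionalExtensionality.

Lemma is_hom_comp (Sg : signature) (A B C : algebra Sg) (f : A -> B) (g : B -> C) :
  is_hom Sg f -> is_hom Sg g -> is_hom Sg (fun a => g (f a)).
Proof. intros Hf Hg o args. rewrite Hf, Hg. reflexivity. Qed.

Lemma surjective_is_epi (Sg : signature) (V : algebra Sg -> Prop) (A B : algebra Sg)
  (phi : A -> B) :
  (forall b, exists a, phi a = b) -> is_epi Sg V phi.
Proof.
  intros Hsurj C _ h1 h2 _ _ Heq b. destruct (Hsurj b) as [a <-]. apply Heq.
Qed.

Lemma ell_is_point (Sg : signature) (V : algebra Sg -> Prop) (L : algebra Sg)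
  (s : system V L) (x : sys_pts s) :
  is_point (@ell _ _ _ s x).
Proof.
  intros o args. exact (f_equal (fun F => F x) (sys_kappa_hom Sg V L s o args)).
Qed.

Section SierpinskiPower.
Variables (Sg : signature) (V : algebra Sg -> Prop) (L : algebra Sg) (HL : V L).
Variables (FS : free1 V) (cop : forall I : Type, coproduct V I (fun _ : I => fr_alg FS)).

Local Notation S_pow := (sierpinski_pow HL FS cop).

Definition cp_gen (I : Type) (i : I) : cp_alg (cop I) :=
  cp_inj Sg V I _ (cop I) i (fr_eta Sg V FS).

Lemma kappa_S_at_hom (a : L) : is_hom Sg (fun t => kappa_S Sg V L HL FS t a).
Proof. apply (fr_ext_hom Sg V FS L HL). Qed.

Lemma theta_gen (I : Type) (y : I -> L) (i : I) :
  theta Sg V L HL FS cop I (cp_gen I i) y = y i.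
Proof.
  unfold theta, cp_gen. rewrite (cp_pair_inj Sg V I _ (cop I) L HL).
  - apply fr_ext_eta.
  - intros j. apply kappa_S_at_hom.
Qed.

Lemma theta_eq_iff (I : Type) (h : cp_alg (cop I) -> L) (y : I -> L) :
  is_hom Sg h ->
  (forall c, h c = theta Sg V L HL FS cop I c y) <-> (forall i, h (cp_gen I i) = y i).
Proof.
  intros Hh. split.
  - intros Heq i. rewrite Heq. apply theta_gen.
  - intros Hgen c. unfold theta.
    apply (cp_pair_uniq Sg V I _ (cop I) L HL).
    + intros i. apply kappa_S_at_hom.
    + exact Hh.
    + intros i t. unfold kappa_S.
      apply (fr_ext_uniq Sg V FS L HL (y i) (fun t => h (cp_inj Sg V I _ (cop I) i t))).
      * apply is_hom_comp; [apply (cp_inj_hom Sg V I _ (cop I)) | exact Hh].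
      * apply Hgen.
Qed.

Lemma sierpinski_pow_morphismP (I : Type) (s : system V L)
  (f : sys_pts s -> (I -> L)) (phi : cp_alg (cop I) -> sys_alg s) :
  is_hom Sg phi ->
  is_morphism Sg V L s (S_pow I) f phi <->
  (forall x i, f x i = ell x (phi (cp_gen I i))).
Proof.
  intros Hphi.
  assert (Hev : forall x, is_hom Sg (fun c => ell x (phi c))).
  { intros x. apply is_hom_comp; [exact Hphi | apply ell_is_point]. }
  split.
  - intros [_ Hmor] x i. symmetry.
    apply (proj1 (theta_eq_iff I _ (f x) (Hev x))). intros c. apply Hmor.
  - intros Hf. split; [exact Hphi |]. intros c x.
    apply (proj2 (theta_eq_iff I _ (f x) (Hev x))). intros i. symmetry. apply Hf.
Qed.

Lemma point_comp_eq_theta_gen (I : Type) (A : algebra Sg) (phi : cp_alg (cop I) -> A)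
  (p : A -> L) :
  is_hom Sg phi -> is_point p ->
  forall c, p (phi c) = theta Sg V L HL FS cop I c (fun i => p (phi (cp_gen I i))).
Proof.
  intros Hphi Hp. apply (theta_eq_iff I (fun c => p (phi c))); [| reflexivity].
  apply is_hom_comp; [exact Hphi | exact Hp].
Qed.

Lemma ell_injective_of_sierpinski_pow_morphism (I : Type) (s : system V L)
  (f : sys_pts s -> (I -> L)) (phi : cp_alg (cop I) -> sys_alg s) :
  is_morphism Sg V L s (S_pow I) f phi -> (forall x x', f x = f x' -> x = x') ->
  forall x x' : sys_pts s, (forall a, ell x a = ell x' a) -> x = x'.
Proof.
  intros Hmor Hf x x' Hell. apply Hf, functional_extensionality. intros i.
  pose proof (proj1 (sierpinski_pow_morphismP I s f phi (proj1 Hmor)) Hmor) as Hcoord.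
  rewrite !Hcoord. apply Hell.
Qed.

Section Counit.
Variable s : system V L.

Local Notation A := (sys_alg s).

Definition counit : cp_alg (cop A) -> A :=
  cp_pair Sg V A _ (cop A) A (sys_alg_in Sg V L s) (fr_ext Sg V FS A (sys_alg_in Sg V L s)).

Lemma counit_hom : is_hom Sg counit.
Proof. apply cp_pair_hom. intros a. apply fr_ext_hom. Qed.

Lemma counit_gen (a : A) : counit (cp_gen A a) = a.
Proof.
  unfold counit, cp_gen. rewrite cp_pair_inj.
  - apply fr_ext_eta.
  - intros b. apply fr_ext_hom.
Qed.

Lemma counit_epi : is_epi Sg V counit.
Proof. apply surjective_is_epi. intros a. exists (cp_gen A a). apply counit_gen. Qed.

Lemma counit_morphism : is_morphism Sg V L s (S_pow A) (fun x => ell x) counit.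
Proof.
  apply (sierpinski_pow_morphismP A s _ _ counit_hom). intros x a.
  rewrite counit_gen. reflexivity.
Qed.

Lemma counit_initial : is_initial Sg V L s (S_pow A) (fun x => ell x) counit.
Proof.
  intros t g psi Hpsi Hmor. split; [exact Hpsi |]. intros a y.
  assert (Hcomp : is_hom Sg (fun c => psi (counit c))).
  { apply is_hom_comp; [apply counit_hom | exact Hpsi]. }
  pose proof (proj1 (sierpinski_pow_morphismP A t _ _ Hcomp) Hmor y a) as Hcoord.
  simpl in Hcoord. rewrite counit_gen in Hcoord. symmetry. exact Hcoord.
Qed.

Lemma counit_point_eq (p y : A -> L) :
  is_point p -> (forall c, p (counit c) = theta Sg V L HL FS cop A c y) -> p = y.
Proof.
  intros Hp Hy. apply functional_extensionality. intros a.
  rewrite <- (theta_gen A y a), <- Hy, counit_gen. reflexivity.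
Qed.

End Counit.
End SierpinskiPower.

Theorem theorem5 (Sg : signature) (V : algebra Sg -> Prop) (HV : variety V)
  (L : algebra Sg) (HL : V L) (FS : free1 V)
  (cop : forall I : Type, coproduct V I (fun _ : I => fr_alg FS))
  (s : system V L) :
  sober s <->
  exists (I : Type) (f : sys_pts s -> (I -> L))
         (phi : cp_alg (cop I) -> sys_alg s),
    is_embedding s (sierpinski_pow HL FS cop I) f phi /\
    (forall (p : sys_alg s -> L), is_point p ->
     forall y : I -> L,
       (forall c, p (phi c) = @ell _ _ _ (sierpinski_pow HL FS cop I) y c) ->
       exists x : sys_pts s, (forall a, @ell _ _ _ s x a = p a) /\ f x = y).
Proof.
  split.
  - intros [Hinj Hsurj].
    exists (sys_alg s), (fun x => ell x), (counit Sg V L FS cop s).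
    split; [split; [| split; [| split]] |].
    + apply counit_morphism.
    + apply counit_initial.
    + intros x x' Hxx'. apply Hinj. intros a. exact (f_equal (fun F => F a) Hxx').
    + apply counit_epi.
    + intros p Hp y Hy. destruct (Hsurj p Hp) as [x Hx]. exists x. split; [exact Hx |].
      rewrite <- (counit_point_eq Sg V L HL FS cop s p y Hp Hy).
      apply functional_extensionality. exact Hx.
  - intros [I [f [phi [[Hmor [_ [Hfinj _]]] Hsob]]]]. split.
    + exact (ell_injective_of_sierpinski_pow_morphism Sg V L HL FS cop I s f phi Hmor Hfinj).
    + intros p Hp.
      destruct (Hsob p Hp _ (point_comp_eq_theta_gen Sg V L HL FS cop I _ phi p (proj1 Hmor) Hp))
        as [x [Hx _]].
      exists x. exact Hx.
Qed.
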